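(* Let $S^0$ be a quasi-ideal adequate transversal of an abundant semigroup $S$. Then there exist a left adequate semigroup $L$ and a right adequate semigroup $R$ (namely the subsemigroups $L=\{x\in S:f_x=f_{\bar x}\}$ and $R=\{x\in S:e_x=e_{\bar x}\}$ of $S$) such that $S\cong T$, where $T=\{(x,a)\in L\times R:\bar x=\bar a\}$ with multiplication $(x,a)(y,b)=(e_xay,\,ayf_b)$ (products in $S$), and such that $T$ contains a quasi-ideal adequate transversal $T^0\cong S^0$.
   Context: For a semigroup $S$, $\mathcal{R}^\ast=\{(a,b): \text{for all } x,y\in S^1,\ xa=ya \iff xb=yb\}$ and $\mathcal{L}^\ast$ dually. $S$ is abundant if every $\mathcal{R}^\ast$-class and $\mathcal{L}^\ast$-class contains an idempotent; adequate if abundant with commuting idempotents; left (resp. right) adequate if abundant and every $\mathcal{R}^\ast$-class (resp. $\mathcal{L}^\ast$-class) contains a unique idempotent. In an adequate semigroup $a^+,a^\ast$ are the unique idempotents $\mathcal{R}^\ast$-, resp. $\mathcal{L}^\ast$-related to $a$. A subsemigroup $U$ of abundant $S$ is a $\ast$-subsemigroup if $U$ is abundant and $\mathcal{L}^\ast_U=\mathcal{L}^\ast_S\cap(U\times U)$, $\mathcal{R}^\ast_U=\mathcal{R}^\ast_S\cap(U\times U)$. An adequate $\ast$-subsemigroup $S^0$ of abundant $S$ is an adequate transversal if for each $x\in S$ there is a unique $\bar x\in S^0$ and idempotents $e,f$ of $S$ with $x=e\bar xf$, $e\,\mathcal{L}\,\bar x^+$, $f\,\mathcal{R}\,\bar x^\ast$;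 these $e,f$ are unique and denoted $e_x,f_x$. It is a quasi-ideal adequate transversal if moreover $S^0SS^0\subseteq S^0$. *)

(* Semigroups are given by a carrier type X, a binary operation
   m, and a predicate U : X -> Prop selecting the (sub)semigroup. *)
From Stdlib Require Import ClassicalEpsilon.

Set Implicit Arguments.

Section SG.
Variable X : Type.
Variable U : X -> Prop.
Variable m : X -> X -> X.

Definition semigroup : Prop :=
  (forall a b, U a -> U b -> U (m a b)) /\
  (forall a b c, U a -> U b -> U c -> m a (m b c) = m (m a b) c).

Definition idem (e : X) : Prop := U e /\ m e e = e.

(* elements of U^1 : None is the adjoined identity *)
Definition in1 (o : option X) : Prop :=
  match o with None => True | Some x => U x end.
Definition lact (o : option X) (a : X) : X :=
  match o with None => a | Some x => m x a end.
Definition ract (a : X) (o : option X) : X :=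
  match o with None => a | Some x => m a x end.

Definition Rstar (a b : X) : Prop :=
  forall x y, in1 x -> in1 y -> (lact x a = lact y a <-> lact x b = lact y b).
Definition Lstar (a b : X) : Prop :=
  forall x y, in1 x -> in1 y -> (ract a x = ract a y <-> ract b x = ract b y).

Definition abundant : Prop :=
  forall a, U a ->
    (exists e, idem e /\ Rstar e a) /\ (exists f, idem f /\ Lstar f a).

Definition adequate : Prop :=
  abundant /\ forall e f, idem e -> idem f -> m e f = m f e.

Definition left_adequate : Prop :=
  abundant /\ forall a e f, U a -> idem e -> idem f -> Rstar e a -> Rstar f a -> e = f.

Definition right_adequate : Prop :=
  abundant /\ forall a e f, U a -> idem e -> idem f -> Lstar e a -> Lstar f a -> e = f.

(* Green's relations: a L b iff U^1 a = U^1 b ; a R b iff a U^1 = b U^1 *)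
Definition GreenL (a b : X) : Prop :=
  exists u v, in1 u /\ in1 v /\ lact u a = b /\ lact v b = a.
Definition GreenR (a b : X) : Prop :=
  exists u v, in1 u /\ in1 v /\ ract a u = b /\ ract b v = a.

Definition iso (Y : Type) (V : Y -> Prop) (n : Y -> Y -> Y) (phi : X -> Y) : Prop :=
  (forall x, U x -> V (phi x)) /\
  (forall x y, U x -> U y -> phi x = phi y -> x = y) /\
  (forall z, V z -> exists x, U x /\ phi x = z) /\
  (forall x y, U x -> U y -> phi (m x y) = n (phi x) (phi y)).
End SG.

Section Trans.
Variable X : Type.
Variable U : X -> Prop.
Variable m : X -> X -> X.

Definition star_sub (V : X -> Prop) : Prop :=
  (forall x, V x -> U x) /\ semigroup V m /\ abundant V m /\
  (forall a b, V a -> V b -> (Lstar V m a b <-> Lstar U m a b)) /\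
  (forall a b, V a -> V b -> (Rstar V m a b <-> Rstar U m a b)).

(* x = e xb f with xb in S0, e,f idempotents of U, e L xb^+, f R xb^*,
   where xb^+ (resp. xb^* ) is the idempotent of S0 that is R*- (resp. L*-)
   related to xb in S0 *)
Definition decomp (S0 : X -> Prop) (x xb e f : X) : Prop :=
  S0 xb /\ idem U m e /\ idem U m f /\ x = m (m e xb) f /\
  (exists p, idem S0 m p /\ Rstar S0 m p xb /\ GreenL U m e p) /\
  (exists q, idem S0 m q /\ Lstar S0 m q xb /\ GreenR U m f q).

Definition adequate_transversal (S0 : X -> Prop) : Prop :=
  semigroup U m /\ abundant U m /\ star_sub S0 /\ adequate S0 m /\
  forall x, U x -> exists! xb, exists e f, decomp S0 x xb e f.

Definition qi_adequate_transversal (S0 : X -> Prop) : Prop :=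
  adequate_transversal S0 /\
  forall a s b, S0 a -> U s -> S0 b -> S0 (m (m a s) b).

(* the (unique) decomposition ((xbar, e_x), f_x), chosen by epsilon *)
Definition dec (S0 : X -> Prop) (x : X) : X * X * X :=
  epsilon (inhabits (x, x, x))
    (fun t => decomp S0 x (fst (fst t)) (snd (fst t)) (snd t)).
Definition bar S0 x := fst (fst (dec S0 x)).
Definition ee S0 x := snd (fst (dec S0 x)).
Definition ff S0 x := snd (dec S0 x).

Definition Lset S0 (x : X) : Prop := U x /\ ff S0 x = ff S0 (bar S0 x).
Definition Rset S0 (x : X) : Prop := U x /\ ee S0 x = ee S0 (bar S0 x).
Definition Tset S0 (p : X * X) : Prop :=
  Lset S0 (fst p) /\ Rset S0 (snd p) /\ bar S0 (fst p) = bar S0 (snd p).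
Definition mulT S0 (p q : X * X) : X * X :=
  (m (m (ee S0 (fst p)) (snd p)) (fst q), m (m (snd p) (fst q)) (ff S0 (snd q))).
End Trans.

(* Everything rests on stating the decomposition x = e (bar x) f equationally
   ([edecomp]): e L (bar x)^+ and f R (bar x)^* become e b^+ = e, b^+ e = b^+ and
   their mirror images.  Then e is R*-related and f L*-related to x, which pins
   down e and f once bar x is known, and the product of x = e b f and y = g c h
   decomposes with middle b (f g) c, which lies in S0 because S0 is a
   quasi-ideal.  From this one reads off that L is a subsemigroup in which every
   idempotent g satisfies g (bar g) = g and (bar g) g = bar g, which forces the
   uniqueness of idempotents in R*-classes, and that x |-> (e_x bar x, bar x f_x)
   is an isomorphism of S onto T.  Every statement about R is the statement about
   L for the opposite multiplication.  Finally the pair (S, S0) is transported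
   along the isomorphism, with T0 the image of S0. *)

From Stdlib Require Import ClassicalEpsilon FunctionalExtensionality.
Set Implicit Arguments.
Unset Strict Implicit.

Notation TT := (fun _ => True).

(* For [dual m], [Rstar], [GreenL] and [lact] unfold to [Lstar], [GreenR] and
   [ract] for [m], so left-right dual statements are instances at [dual m]. *)
Definition dual (X : Type) (m : X -> X -> X) : X -> X -> X := fun a b => m b a.

Section Duality.
Variables (X : Type) (V : X -> Prop) (m : X -> X -> X).

Lemma assoc_dual :
  (forall a b c, m a (m b c) = m (m a b) c) ->
  forall a b c, dual m a (dual m b c) = dual m (dual m a b) c.
Proof. unfold dual; intros Hassoc a b c; symmetry; apply Hassoc. Qed.

Lemma semigroup_dual : semigroup V m -> semigroup V (dual m).
Proof.
  intros [Hcl Hassoc]; split; unfold dual; auto.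
  intros a b c Ha Hb Hc; symmetry; apply Hassoc; assumption.
Qed.

Lemma abundant_dual : abundant V m -> abundant V (dual m).
Proof. intros Hab a Ha; destruct (Hab a Ha) as [HR HL]; split; assumption. Qed.

Lemma adequate_dual : adequate V m -> adequate V (dual m).
Proof.
  intros [Hab Hcomm]; split; [exact (abundant_dual Hab)|].
  intros e f He Hf; symmetry; exact (Hcomm e f He Hf).
Qed.

End Duality.

Lemma right_adequate_of_dual (X : Type) (V : X -> Prop) (m : X -> X -> X) :
  left_adequate V (dual m) -> right_adequate V m.
Proof. intros [Hab Huniq]; split; [exact (abundant_dual Hab) | exact Huniq]. Qed.

Section StarRelations.
Variables (X : Type) (V : X -> Prop) (m : X -> X -> X).

Lemma Rstar_refl a : Rstar V m a a.
Proof. intros x y _ _; reflexivity. Qed.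

Lemma Rstar_restrict a b : Rstar TT m a b -> Rstar V m a b.
Proof. intros H x y _ _; apply H; [destruct x | destruct y]; exact I. Qed.

Lemma Rstar_lfix p a q : Rstar V m p a -> V q -> (m q p = p <-> m q a = a).
Proof. intros H Hq; exact (H (Some q) None Hq I). Qed.

Lemma Rstar_idem_l p a : idem V m p -> Rstar V m p a -> m p a = a.
Proof. intros [Hp Hpp] H; apply (Rstar_lfix H Hp); exact Hpp. Qed.

Lemma GreenL_idemP e p :
  (forall a b c, m a (m b c) = m (m a b) c) -> m e e = e -> m p p = p ->
  (GreenL TT m e p <-> m e p = e /\ m p e = p).
Proof.
  intros Hassoc He Hp; split.
  - intros [u [v [_ [_ [Eu Ev]]]]]; split.
    + destruct v as [v|]; simpl in Ev;
        [rewrite <- Ev, <- Hassoc, Hp | rewrite Ev, He]; reflexivity.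
    + destruct u as [u|]; simpl in Eu;
        [rewrite <- Eu, <- Hassoc, He | rewrite <- Eu, He]; reflexivity.
  - intros [Eep Epe]; exists (Some p), (Some e); simpl; auto.
Qed.

End StarRelations.

Section StarRelationsDual.
Variables (X : Type) (V : X -> Prop) (m : X -> X -> X).

Lemma Lstar_restrict a b : Lstar TT m a b -> Lstar V m a b.
Proof. exact (@Rstar_restrict X V (dual m) a b). Qed.

Lemma GreenR_idemP f q :
  (forall a b c, m a (m b c) = m (m a b) c) -> m f f = f -> m q q = q ->
  (GreenR TT m f q <-> m f q = q /\ m q f = f).
Proof.
  intros Hassoc Hf Hq.
  destruct (GreenL_idemP (m := dual m) (assoc_dual Hassoc) Hf Hq) as [H1 H2].
  unfold dual in *; tauto.
Qed.

End StarRelationsDual.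

Section Plus.
Variables (X : Type) (m : X -> X -> X) (S0 : X -> Prop).
Hypothesis HS0 : adequate S0 m.
Hypothesis HS0R : forall a b, S0 a -> S0 b -> Rstar S0 m a b -> Rstar TT m a b.

Definition aplus (a : X) : X :=
  epsilon (inhabits a) (fun p => idem S0 m p /\ Rstar S0 m p a).

Lemma aplus_spec a : S0 a -> idem S0 m (aplus a) /\ Rstar S0 m (aplus a) a.
Proof. intro Ha; unfold aplus; apply epsilon_spec; exact (proj1 (proj1 HS0 a Ha)). Qed.

Lemma aplus_S0 a : S0 a -> S0 (aplus a).
Proof. intro Ha; apply (aplus_spec Ha). Qed.

Lemma aplus_idem a : S0 a -> m (aplus a) (aplus a) = aplus a.
Proof. intro Ha; apply (aplus_spec Ha). Qed.

Lemma aplus_l a : S0 a -> m (aplus a) a = a.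
Proof. intro Ha; destruct (aplus_spec Ha) as [Hid HR]; exact (Rstar_idem_l Hid HR). Qed.

Lemma aplus_le a q : S0 a -> idem S0 m q -> m q a = a ->
  m q (aplus a) = aplus a /\ m (aplus a) q = aplus a.
Proof.
  intros Ha Hq Eq; destruct (aplus_spec Ha) as [Hid HR].
  assert (Eq' : m q (aplus a) = aplus a) by exact (proj2 (Rstar_lfix HR (proj1 Hq)) Eq).
  split; [exact Eq' | rewrite (proj2 HS0 _ _ Hid Hq); exact Eq'].
Qed.

Lemma aplus_unique a p : S0 a -> idem S0 m p -> Rstar S0 m p a -> aplus a = p.
Proof.
  intros Ha Hp HR.
  destruct (aplus_le Ha Hp (Rstar_idem_l Hp HR)) as [_ E].
  rewrite <- E; apply (Rstar_lfix HR (aplus_S0 Ha)), aplus_l, Ha.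
Qed.

Lemma aplus_of_idem p : S0 p -> m p p = p -> aplus p = p.
Proof. intros Hp Epp; apply aplus_unique; [exact Hp | split; assumption | apply Rstar_refl]. Qed.

Lemma aplus_cancel a u v : S0 a -> m u a = m v a -> m u (aplus a) = m v (aplus a).
Proof.
  intros Ha E; destruct (aplus_spec Ha) as [[Hp _] HR].
  exact (proj2 (@HS0R _ _ Hp Ha HR (Some u) (Some v) I I) E).
Qed.

End Plus.

Definition astar (X : Type) (m : X -> X -> X) (S0 : X -> Prop) : X -> X :=
  aplus (dual m) S0.

Section Star.
Variables (X : Type) (m : X -> X -> X) (S0 : X -> Prop).
Hypothesis HS0 : adequate S0 m.
Hypothesis HS0L : forall a b, S0 a -> S0 b -> Lstar S0 m a b -> Lstar TT m a b.

Lemma astar_spec a : S0 a -> idem S0 m (astar m S0 a) /\ Lstar S0 m (astar m S0 a) a.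
Proof. apply (aplus_spec (adequate_dual HS0)). Qed.

Lemma astar_S0 a : S0 a -> S0 (astar m S0 a).
Proof. apply (aplus_S0 (adequate_dual HS0)). Qed.

Lemma astar_idem a : S0 a -> m (astar m S0 a) (astar m S0 a) = astar m S0 a.
Proof. apply (aplus_idem (adequate_dual HS0)). Qed.

Lemma astar_r a : S0 a -> m a (astar m S0 a) = a.
Proof. apply (aplus_l (adequate_dual HS0)). Qed.

Lemma astar_le a q : S0 a -> idem S0 m q -> m a q = a ->
  m (astar m S0 a) q = astar m S0 a /\ m q (astar m S0 a) = astar m S0 a.
Proof. apply (aplus_le (adequate_dual HS0)). Qed.

Lemma astar_unique a p : S0 a -> idem S0 m p -> Lstar S0 m p a -> astar m S0 a = p.
Proof. apply (aplus_unique (adequate_dual HS0)). Qed.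

Lemma astar_of_idem p : S0 p -> m p p = p -> astar m S0 p = p.
Proof. apply (aplus_of_idem (adequate_dual HS0)). Qed.

Lemma astar_cancel a u v : S0 a -> m a u = m a v -> m (astar m S0 a) u = m (astar m S0 a) v.
Proof. apply (aplus_cancel (adequate_dual HS0) HS0L). Qed.

End Star.

Section Decomposition.
Variables (X : Type) (m : X -> X -> X) (S0 : X -> Prop).
Hypothesis Hassoc : forall a b c, m a (m b c) = m (m a b) c.
Hypothesis HS0 : adequate S0 m.
Hypothesis HS0R : forall a b, S0 a -> S0 b -> Rstar S0 m a b -> Rstar TT m a b.

Local Notation "a ^+" := (aplus m S0 a) (at level 8, format "a ^+").
Local Notation "a ^*" := (astar m S0 a) (at level 8, format "a ^*").

(* [decomp], with [e L b^+] and [f R b^*] in equational form. *)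
Record edecomp (x b e f : X) : Prop := {
  edecomp_S0 : S0 b;
  edecomp_idem_e : m e e = e;
  edecomp_idem_f : m f f = f;
  edecomp_eq : x = m (m e b) f;
  edecomp_e_plus : m e b^+ = e;
  edecomp_plus_e : m b^+ e = b^+;
  edecomp_f_star : m f b^* = b^*;
  edecomp_star_f : m b^* f = f }.

Lemma lact_mul (u : option X) a c : lact m u (m a c) = m (lact m u a) c.
Proof. destruct u; simpl; auto. Qed.

Lemma edecomp_of_S0 a : S0 a -> edecomp a a a^+ a^*.
Proof.
  intro Ha; split; auto using aplus_idem, astar_idem.
  rewrite aplus_l, astar_r; auto.
Qed.

Lemma edecomp_left e b : S0 b -> m e e = e -> m e b^+ = e -> m b^+ e = b^+ ->
  edecomp (m e b) b e b^*.
Proof.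
  intros Hb He E1 E2; split; auto using astar_idem.
  rewrite <- Hassoc, astar_r; auto.
Qed.

Lemma edecomp_Rstar x b e f : edecomp x b e f -> Rstar TT m e x.
Proof.
  intros [Hb _ _ Hx Eeb _ Efb _] u v _ _; rewrite Hx, !lact_mul.
  split; intro E; [rewrite E; reflexivity |].
  assert (Eb : m (m (m (lact m u e) b) f) b^* = m (m (m (lact m v e) b) f) b^*)
    by (rewrite E; reflexivity).
  rewrite <- !Hassoc, Efb, (astar_r HS0 Hb) in Eb.
  rewrite <- Eeb, !lact_mul; exact (aplus_cancel HS0 HS0R Hb Eb).
Qed.

Lemma edecomp_e_unique x b e f e' f' : edecomp x b e f -> edecomp x b e' f' -> e = e'.
Proof.
  intros D D'.
  assert (Ee'e : m e' e = e).
  { apply (Rstar_lfix (edecomp_Rstar D) I).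
    rewrite (edecomp_eq D'), !Hassoc, (edecomp_idem_e D'); reflexivity. }
  assert (Ee'e' : m e' e = e').
  { rewrite <- (edecomp_e_plus D') at 1.
    rewrite <- Hassoc, (edecomp_plus_e D); exact (edecomp_e_plus D'). }
  congruence.
Qed.

End Decomposition.

Lemma edecomp_of_dual (X : Type) (m : X -> X -> X) (S0 : X -> Prop) x b e f :
  (forall a b c, m a (m b c) = m (m a b) c) ->
  edecomp (dual m) S0 x b f e -> edecomp m S0 x b e f.
Proof.
  intros Hassoc [Hb Hf He Hx E1 E2 E3 E4]; split; try assumption.
  unfold dual in Hx; rewrite Hx; apply Hassoc.
Qed.

Lemma edecomp_dual (X : Type) (m : X -> X -> X) (S0 : X -> Prop) x b e f :
  (forall a b c, m a (m b c) = m (m a b) c) ->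
  edecomp m S0 x b e f -> edecomp (dual m) S0 x b f e.
Proof. intro Hassoc; exact (edecomp_of_dual (m := dual m) (assoc_dual Hassoc)). Qed.

Section DecompositionDual.
Variables (X : Type) (m : X -> X -> X) (S0 : X -> Prop).
Hypothesis Hassoc : forall a b c, m a (m b c) = m (m a b) c.
Hypothesis HS0 : adequate S0 m.
Hypothesis HS0L : forall a b, S0 a -> S0 b -> Lstar S0 m a b -> Lstar TT m a b.

Local Notation "a ^+" := (aplus m S0 a) (at level 8, format "a ^+").
Local Notation "a ^*" := (astar m S0 a) (at level 8, format "a ^*").

Lemma edecomp_right b f : S0 b -> m f f = f -> m f b^* = b^* -> m b^* f = f ->
  edecomp m S0 (m b f) b b^+ f.
Proof.
  intros; apply edecomp_of_dual; [exact Hassoc |].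
  apply (edecomp_left (m := dual m) (S0 := S0)); auto using assoc_dual, adequate_dual.
Qed.

Lemma edecomp_Lstar x b e f : edecomp m S0 x b e f -> Lstar TT m f x.
Proof.
  intro D; exact (edecomp_Rstar (assoc_dual Hassoc) (adequate_dual HS0) HS0L
                    (edecomp_dual Hassoc D)).
Qed.

Lemma edecomp_f_unique x b e f e' f' :
  edecomp m S0 x b e f -> edecomp m S0 x b e' f' -> f = f'.
Proof.
  intros D D'; exact (edecomp_e_unique (assoc_dual Hassoc) (adequate_dual HS0) HS0L
                        (edecomp_dual Hassoc D) (edecomp_dual Hassoc D')).
Qed.

End DecompositionDual.

Lemma qi_adequate_transversal_assoc (X : Type) (m : X -> X -> X) (S0 : X -> Prop) :
  qi_adequate_transversal TT m S0 -> forall a b c, m a (m b c) = m (m a b) c.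
Proof. intros [[[_ H] _] _] a b c; apply H; exact I. Qed.

Lemma decomp_dual (X : Type) (m : X -> X -> X) (S0 : X -> Prop) x b e f :
  (forall a b c, m a (m b c) = m (m a b) c) ->
  decomp TT m S0 x b e f -> decomp TT (dual m) S0 x b f e.
Proof.
  intros Hassoc (Hb & He & Hf & Hx & P & Q).
  refine (conj Hb (conj Hf (conj He (conj _ (conj Q P))))).
  unfold dual; rewrite Hx; symmetry; apply Hassoc.
Qed.

Lemma qi_adequate_transversal_dual (X : Type) (m : X -> X -> X) (S0 : X -> Prop) :
  qi_adequate_transversal TT m S0 -> qi_adequate_transversal TT (dual m) S0.
Proof.
  intro HS0; pose proof (qi_adequate_transversal_assoc HS0) as Hassoc.
  destruct HS0 as [(Hsg & Hab & (Hsub & Hsg0 & Hab0 & HL & HR) & Had & Huniq) Hqi].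
  split; [split; [| split; [| split; [| split]]] |].
  - exact (semigroup_dual Hsg).
  - exact (abundant_dual Hab).
  - exact (conj Hsub (conj (semigroup_dual Hsg0) (conj (abundant_dual Hab0) (conj HR HL)))).
  - exact (adequate_dual Had).
  - intros x _; destruct (Huniq x I) as [b [[e [f D]] Hb]].
    exists b; split; [exists f, e; exact (decomp_dual Hassoc D) |].
    intros b' [f' [e' D']]; apply Hb; exists e', f'.
    exact (decomp_dual (m := dual m) (assoc_dual Hassoc) D').
  - intros a s b Ha _ Hb; unfold dual; rewrite Hassoc; exact (Hqi b s a Hb I Ha).
Qed.

Section Transversal.
Variables (X : Type) (m : X -> X -> X) (S0 : X -> Prop).
Hypothesis HS0 : qi_adequate_transversal TT m S0.

Let Hassoc : forall a b c, m a (m b c) = m (m a b) c.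
Proof. exact (qi_adequate_transversal_assoc HS0). Qed.

Let HS0ad : adequate S0 m.
Proof. destruct HS0 as [(_ & _ & _ & H & _) _]; exact H. Qed.

Let HS0R : forall a b, S0 a -> S0 b -> Rstar S0 m a b -> Rstar TT m a b.
Proof. destruct HS0 as [(_ & _ & (_ & _ & _ & _ & H) & _) _]; intros; apply H; auto. Qed.

Let HS0L : forall a b, S0 a -> S0 b -> Lstar S0 m a b -> Lstar TT m a b.
Proof. destruct HS0 as [(_ & _ & (_ & _ & _ & H & _) & _) _]; intros; apply H; auto. Qed.

Let HS0qi : forall a s b, S0 a -> S0 b -> S0 (m (m a s) b).
Proof. destruct HS0 as [_ H]; intros; apply H; auto. Qed.

Let Huniq : forall x, exists! b, exists e f, decomp TT m S0 x b e f.
Proof. destruct HS0 as [(_ & _ & _ & _ & H) _]; intro; apply H; exact I. Qed.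

Local Notation "a ^+" := (aplus m S0 a) (at level 8, format "a ^+").
Local Notation "a ^*" := (astar m S0 a) (at level 8, format "a ^*").
Local Notation bar_ := (bar TT m S0).
Local Notation e_ := (ee TT m S0).
Local Notation f_ := (ff TT m S0).
Local Notation L := (Lset TT m S0).

Lemma decompP x b e f : decomp TT m S0 x b e f <-> edecomp m S0 x b e f.
Proof.
  split.
  - intros (Hb & [_ He] & [_ Hf] & Hx & (p & Hp & Rp & Gp) & (q & Hq & Lq & Gq)).
    rewrite <- (aplus_unique HS0ad Hb Hp Rp) in Gp.
    rewrite <- (astar_unique HS0ad Hb Hq Lq) in Gq.
    apply GreenL_idemP in Gp; auto using aplus_idem.
    apply GreenR_idemP in Gq; auto using astar_idem.
    destruct Gp, Gq; split; assumption.
  - intros [Hb He Hf Hx E1 E2 E3 E4].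
    refine (conj Hb (conj (conj I He) (conj (conj I Hf) (conj Hx (conj _ _))))).
    + destruct (aplus_spec HS0ad Hb) as [Hp Rp].
      exists b^+; split; [exact Hp | split; [exact Rp |]].
      apply GreenL_idemP; auto using aplus_idem.
    + destruct (astar_spec HS0ad Hb) as [Hq Lq].
      exists b^*; split; [exact Hq | split; [exact Lq |]].
      apply GreenR_idemP; auto using astar_idem.
Qed.

Lemma dec_edecomp x : edecomp m S0 x (bar_ x) (e_ x) (f_ x).
Proof.
  apply decompP; unfold bar, ee, ff, dec.
  apply (epsilon_spec (inhabits (x, x, x))
           (fun t => decomp TT m S0 x (fst (fst t)) (snd (fst t)) (snd t))).
  destruct (Huniq x) as [b [[e [f D]] _]]; exists (b, e, f); exact D.
Qed.

Lemma edecomp_unique x b e f b' e' f' :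
  edecomp m S0 x b e f -> edecomp m S0 x b' e' f' -> b = b' /\ e = e' /\ f = f'.
Proof.
  intros D D'.
  assert (Eb : b = b').
  { destruct (Huniq x) as [b0 [_ Hb0]].
    rewrite <- (Hb0 b), <- (Hb0 b'); auto.
    - exists e', f'; apply decompP; exact D'.
    - exists e, f; apply decompP; exact D. }
  subst b'; split; [reflexivity | split].
  - exact (edecomp_e_unique Hassoc HS0ad HS0R D D').
  - exact (edecomp_f_unique Hassoc HS0ad HS0L D D').
Qed.

Lemma edecomp_bar x b e f : edecomp m S0 x b e f -> bar_ x = b /\ e_ x = e /\ f_ x = f.
Proof. exact (edecomp_unique (dec_edecomp x)). Qed.

Lemma bar_S0 x : S0 (bar_ x).
Proof. exact (edecomp_S0 (dec_edecomp x)). Qed.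

Lemma bar_of_S0 a : S0 a -> bar_ a = a /\ e_ a = a^+ /\ f_ a = a^*.
Proof. intro Ha; apply edecomp_bar, edecomp_of_S0; assumption. Qed.

Lemma edecomp_mul x b e f y c g h w :
  edecomp m S0 x b e f -> edecomp m S0 y c g h -> w = m (m b (m f g)) c ->
  edecomp m S0 (m x y) w (m e w^+) (m w^* h).
Proof.
  intros [Hb He Hf Hx E1 E2 E3 E4] [Hc Hg Hh Hy G1 G2 G3 G4] Hw.
  assert (Sw : S0 w) by (rewrite Hw; apply HS0qi; assumption).
  destruct (aplus_le HS0ad Sw (proj1 (aplus_spec HS0ad Hb))) as [_ Q1].
  { rewrite Hw, !Hassoc, aplus_l; auto. }
  destruct (astar_le HS0ad Sw (proj1 (astar_spec HS0ad Hc))) as [_ Q2].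
  { rewrite Hw, <- !Hassoc, astar_r; auto. }
  assert (Wp : m w^+ e = w^+) by (rewrite <- Q1, <- Hassoc, E2; reflexivity).
  assert (Wq : m h w^* = w^*) by (rewrite <- Q2, Hassoc, G3; reflexivity).
  split; auto.
  - rewrite <- !Hassoc, (Hassoc w^+), Wp, aplus_idem; auto.
  - rewrite <- !Hassoc, (Hassoc h), Wq, Hassoc, astar_idem; auto.
  - rewrite <- (Hassoc e), aplus_l, Hassoc, <- (Hassoc e w), astar_r; auto.
    rewrite Hx, Hy, Hw, !Hassoc; reflexivity.
  - rewrite <- Hassoc, aplus_idem; auto.
  - rewrite Hassoc, Wp, aplus_idem; auto.
  - rewrite <- Hassoc, Wq, astar_idem; auto.
  - rewrite Hassoc, astar_idem; auto.
Qed.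

Lemma Lset_iff x : L x <-> f_ x = (bar_ x)^*.
Proof. unfold Lset; rewrite (proj2 (proj2 (bar_of_S0 (bar_S0 x)))); tauto. Qed.

Lemma Lset_of_S0 a : S0 a -> L a.
Proof. intro Ha; apply Lset_iff; destruct (bar_of_S0 Ha) as (-> & _ & ->); reflexivity. Qed.

Lemma Lset_mul x y : L x -> L y -> L (m x y).
Proof.
  intros _ Hy; apply Lset_iff in Hy; apply Lset_iff.
  set (w := m (m (bar_ x) (m (f_ x) (e_ y))) (bar_ y)).
  destruct (edecomp_bar (edecomp_mul (dec_edecomp x) (dec_edecomp y) (eq_refl w)))
    as (-> & _ & ->).
  rewrite Hy.
  assert (Sw : S0 w) by (apply HS0qi; apply bar_S0).
  apply (astar_le HS0ad Sw (proj1 (astar_spec HS0ad (bar_S0 y)))).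
  unfold w; rewrite <- Hassoc, astar_r; auto using bar_S0.
Qed.

Lemma Lset_ee x : L (e_ x).
Proof.
  destruct (dec_edecomp x) as [Hb He _ _ E1 E2 _ _].
  assert (Hp := aplus_S0 HS0ad Hb); assert (Hpp := aplus_idem HS0ad Hb).
  assert (D : edecomp m S0 (m (e_ x) (bar_ x)^+) (bar_ x)^+ (e_ x) ((bar_ x)^+)^* ).
  { apply (edecomp_left Hassoc HS0ad); rewrite ?(aplus_of_idem HS0ad Hp Hpp); assumption. }
  rewrite E1 in D; apply Lset_iff; destruct (edecomp_bar D) as (-> & _ & ->); reflexivity.
Qed.

(* With b := bar g we have g = e_g b; idempotency of g gives b e_g b = b, whence
   b^* g = b^* by L*-cancellation of b, and g decomposes with middle b^*. *)
Lemma Lset_idem g : L g -> m g g = g -> edecomp m S0 g (bar_ g) g (bar_ g).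
Proof.
  intros HL Hgg; apply Lset_iff in HL.
  destruct (dec_edecomp g) as [Hb _ _ Hx _ E2 _ _].
  set (b := bar_ g) in *; set (e := e_ g) in *.
  rewrite HL, <- Hassoc, (astar_r HS0ad Hb) in Hx.
  assert (Hbeb : m (m b e) b = b).
  { assert (K : m b^+ (m g g) = m b^+ g) by (rewrite Hgg; reflexivity).
    rewrite Hx, !Hassoc, E2, (aplus_l HS0ad Hb) in K; exact K. }
  assert (Hsg : m b^* g = b^*).
  { transitivity (m b^* b^*); [| exact (astar_idem HS0ad Hb)].
    apply (astar_cancel HS0ad HS0L Hb).
    rewrite Hx, Hassoc, Hbeb, (astar_r HS0ad Hb); reflexivity. }
  assert (Hgs : m g b^* = g) by (rewrite Hx, <- Hassoc, (astar_r HS0ad Hb); reflexivity).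
  assert (Hs := astar_S0 HS0ad Hb); assert (Hss := astar_idem HS0ad Hb).
  assert (D : edecomp m S0 g b^* g b^*).
  { split; rewrite ?(aplus_of_idem HS0ad Hs Hss), ?(astar_of_idem HS0ad Hs Hss);
      first [assumption | congruence]. }
  destruct (edecomp_bar D) as (Eb & _ & _); unfold b; rewrite Eb; exact D.
Qed.

Lemma Lset_idem_bar g : L g -> m g g = g ->
  m (bar_ g) (bar_ g) = bar_ g /\ m g (bar_ g) = g /\ m (bar_ g) g = bar_ g.
Proof.
  intros HL Hgg; destruct (Lset_idem HL Hgg) as [Hb _ Hbb _ E1 E2 _ _].
  rewrite (aplus_of_idem HS0ad Hb Hbb) in E1, E2; auto.
Qed.

Lemma Lset_idem_bar_absorb e f : L e -> m e e = e -> L f -> m f f = f -> m e f = f ->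
  m (bar_ e) (bar_ f) = bar_ f.
Proof.
  intros He Hee Hf Hff Eef.
  assert (De := Lset_idem He Hee); assert (Df := Lset_idem Hf Hff).
  assert (D := edecomp_mul De Df eq_refl); rewrite Eef in D.
  destruct (edecomp_unique Df D) as [Eq _].
  rewrite Eq, !Hassoc, !(edecomp_idem_f De); reflexivity.
Qed.

Lemma Lset_abundant : abundant L m.
Proof.
  intros a Ha; assert (D := dec_edecomp a); split.
  - exists (e_ a); split; [split; [apply Lset_ee | exact (edecomp_idem_e D)] |].
    apply Rstar_restrict, (edecomp_Rstar Hassoc HS0ad HS0R D).
  - exists (f_ a); split; [split; [| exact (edecomp_idem_f D)] |].
    + rewrite (proj1 (Lset_iff a) Ha); apply Lset_of_S0, (astar_S0 HS0ad), bar_S0.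
    + apply Lstar_restrict, (edecomp_Lstar Hassoc HS0ad HS0L D).
Qed.

Lemma Lset_idem_Rstar_unique a e f :
  idem L m e -> idem L m f -> Rstar L m e a -> Rstar L m f a -> e = f.
Proof.
  intros [He Hee] [Hf Hff] Re Rf.
  assert (Efe : m f e = e) by apply (Rstar_lfix Re Hf), (Rstar_idem_l (conj Hf Hff) Rf).
  assert (Eef : m e f = f) by apply (Rstar_lfix Rf He), (Rstar_idem_l (conj He Hee) Re).
  destruct (Lset_idem_bar He Hee) as (Hp & Ep1 & _).
  destruct (Lset_idem_bar Hf Hff) as (Hq & _ & Eq2).
  assert (Epq : bar_ e = bar_ f).
  { rewrite <- (Lset_idem_bar_absorb Hf Hff He Hee Efe).
    rewrite (proj2 HS0ad _ _ (conj (bar_S0 f) Hq) (conj (bar_S0 e) Hp)).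
    exact (Lset_idem_bar_absorb He Hee Hf Hff Eef). }
  assert (Eef' : m e f = e).
  { rewrite <- Ep1 at 1; rewrite <- Hassoc, Epq, Eq2, <- Epq; exact Ep1. }
  congruence.
Qed.

Lemma Lset_left_adequate : semigroup L m /\ left_adequate L m.
Proof.
  split; [split; [exact Lset_mul | intros; apply Hassoc] | split].
  - exact Lset_abundant.
  - intros a e f _; apply Lset_idem_Rstar_unique.
Qed.

Lemma Rset_iff x : Rset TT m S0 x <-> e_ x = (bar_ x)^+.
Proof. unfold Rset; rewrite (proj1 (proj2 (bar_of_S0 (bar_S0 x)))); tauto. Qed.

Definition lr_pair (x : X) : X * X := (m (e_ x) (bar_ x), m (bar_ x) (f_ x)).

Lemma edecomp_lr_pair_fst x : edecomp m S0 (fst (lr_pair x)) (bar_ x) (e_ x) (bar_ x)^*.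
Proof.
  destruct (dec_edecomp x) as [Hb He _ _ E1 E2 _ _].
  exact (edecomp_left Hassoc HS0ad Hb He E1 E2).
Qed.

Lemma edecomp_lr_pair_snd x : edecomp m S0 (snd (lr_pair x)) (bar_ x) (bar_ x)^+ (f_ x).
Proof.
  destruct (dec_edecomp x) as [Hb _ Hf _ _ _ E3 E4].
  exact (edecomp_right Hassoc HS0ad Hb Hf E3 E4).
Qed.

Local Notation T := (Tset TT m S0).
Local Notation mT := (mulT TT m S0).

Lemma lr_pair_T x : T (lr_pair x).
Proof.
  destruct (edecomp_bar (edecomp_lr_pair_fst x)) as (B1 & _ & F1).
  destruct (edecomp_bar (edecomp_lr_pair_snd x)) as (B2 & E2 & _).
  split; [| split].
  - apply Lset_iff; rewrite B1, F1; reflexivity.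
  - apply Rset_iff; rewrite B2, E2; reflexivity.
  - congruence.
Qed.

Lemma lr_pair_inj x y : lr_pair x = lr_pair y -> x = y.
Proof.
  intro E.
  destruct (edecomp_bar (edecomp_lr_pair_fst x)) as (Bx & Ex & _).
  destruct (edecomp_bar (edecomp_lr_pair_fst y)) as (By & Ey & _).
  destruct (edecomp_bar (edecomp_lr_pair_snd x)) as (_ & _ & Fx).
  destruct (edecomp_bar (edecomp_lr_pair_snd y)) as (_ & _ & Fy).
  rewrite E in Bx, Ex, Fx.
  rewrite (edecomp_eq (dec_edecomp x)), (edecomp_eq (dec_edecomp y)); congruence.
Qed.

Lemma lr_pair_surj p : T p -> exists x, lr_pair x = p.
Proof.
  destruct p as [y a]; intros (HL & HR & Eb); simpl in *.
  apply Lset_iff in HL; apply Rset_iff in HR.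
  destruct (dec_edecomp y) as [Hb He _ Hy E1 E2 _ _].
  destruct (dec_edecomp a) as [_ _ Hf Ha _ _ E3 E4].
  rewrite <- Eb in HR, Ha, E3, E4.
  set (x := m (m (e_ y) (bar_ y)) (f_ a)).
  assert (D : edecomp m S0 x (bar_ y) (e_ y) (f_ a)) by (split; auto).
  exists x; unfold lr_pair; destruct (edecomp_bar D) as (-> & -> & ->); f_equal.
  - rewrite HL, <- Hassoc, (astar_r HS0ad Hb) in Hy; symmetry; exact Hy.
  - rewrite HR, (aplus_l HS0ad Hb) in Ha; symmetry; exact Ha.
Qed.

Lemma lr_pair_mul x y : lr_pair (m x y) = mT (lr_pair x) (lr_pair y).
Proof.
  unfold mulT.
  destruct (edecomp_bar (edecomp_lr_pair_fst x)) as (_ & -> & _).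
  destruct (edecomp_bar (edecomp_lr_pair_snd y)) as (_ & _ & ->).
  set (w := m (m (bar_ x) (m (f_ x) (e_ y))) (bar_ y)).
  assert (Sw : S0 w) by (apply HS0qi; apply bar_S0).
  unfold lr_pair; cbn [fst snd].
  destruct (edecomp_bar (edecomp_mul (dec_edecomp x) (dec_edecomp y) (eq_refl w)))
    as (-> & -> & ->).
  f_equal.
  - rewrite <- Hassoc, (aplus_l HS0ad Sw); unfold w; rewrite !Hassoc; reflexivity.
  - rewrite Hassoc, (astar_r HS0ad Sw); unfold w; rewrite !Hassoc; reflexivity.
Qed.

Lemma lr_pair_iso : iso TT m T mT lr_pair.
Proof.
  split; [| split; [| split]].
  - intros x _; apply lr_pair_T.
  - intros x y _ _; apply lr_pair_inj.
  - intros p Hp; destruct (lr_pair_surj Hp) as [x Ex]; exists x; split; [exact I | exact Ex].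
  - intros x y _ _; apply lr_pair_mul.
Qed.

End Transversal.

Lemma dec_dual (X : Type) (m : X -> X -> X) (S0 : X -> Prop) :
  qi_adequate_transversal TT m S0 -> forall x,
  bar TT (dual m) S0 x = bar TT m S0 x /\ ee TT (dual m) S0 x = ff TT m S0 x /\
  ff TT (dual m) S0 x = ee TT m S0 x.
Proof.
  intros HS0 x.
  assert (D := dec_edecomp (qi_adequate_transversal_dual HS0) x).
  apply (edecomp_of_dual (qi_adequate_transversal_assoc HS0)) in D.
  destruct (edecomp_bar HS0 D) as (B & E & F); auto.
Qed.

Lemma Rset_dual (X : Type) (m : X -> X -> X) (S0 : X -> Prop) :
  qi_adequate_transversal TT m S0 -> Rset TT m S0 = Lset TT (dual m) S0.
Proof.
  intro HS0; apply functional_extensionality; intro x; unfold Rset, Lset.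
  destruct (dec_dual HS0 x) as (-> & _ & ->).
  destruct (dec_dual HS0 (bar TT m S0 x)) as (_ & _ & ->).
  reflexivity.
Qed.

Lemma Rset_right_adequate (X : Type) (m : X -> X -> X) (S0 : X -> Prop) :
  qi_adequate_transversal TT m S0 ->
  semigroup (Rset TT m S0) m /\ right_adequate (Rset TT m S0) m.
Proof.
  intro HS0; rewrite (Rset_dual HS0).
  destruct (Lset_left_adequate (qi_adequate_transversal_dual HS0)) as [Hsg Hadq].
  split; [exact (semigroup_dual Hsg) | exact (right_adequate_of_dual Hadq)].
Qed.

Section Transport.
Variables (X Y : Type) (U : X -> Prop) (V : Y -> Prop).
Variables (m : X -> X -> X) (n : Y -> Y -> Y) (phi : X -> Y).
Hypothesis Hiso : iso U m V n phi.
Hypothesis HU : forall a b, U a -> U b -> U (m a b).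

Lemma iso_in x : U x -> V (phi x).
Proof. apply Hiso. Qed.

Lemma iso_eq s t : U s -> U t -> (phi s = phi t <-> s = t).
Proof. intros Hs Ht; split; [apply Hiso; assumption | intros ->; reflexivity]. Qed.

Lemma iso_surj z : V z -> exists x, U x /\ phi x = z.
Proof. apply Hiso. Qed.

Lemma iso_mul x y : U x -> U y -> phi (m x y) = n (phi x) (phi y).
Proof. apply Hiso. Qed.

Lemma in1_iso_pull (o : option Y) : in1 V o -> exists o', in1 U o' /\ o = option_map phi o'.
Proof.
  destruct o as [z|]; simpl; intro Hz.
  - destruct (iso_surj Hz) as [x [Hx <-]]; exists (Some x); auto.
  - exists None; auto.
Qed.

Lemma in1_iso (o : option X) : in1 U o -> in1 V (option_map phi o).
Proof. destruct o; simpl; auto using iso_in. Qed.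

Lemma lact_in (o : option X) a : in1 U o -> U a -> U (lact m o a).
Proof. destruct o; simpl; auto. Qed.

Lemma lact_iso (o : option X) a :
  in1 U o -> U a -> lact n (option_map phi o) (phi a) = phi (lact m o a).
Proof. destruct o; simpl; auto; intros; symmetry; apply iso_mul; assumption. Qed.

Lemma Rstar_iso a b : U a -> U b -> (Rstar U m a b <-> Rstar V n (phi a) (phi b)).
Proof.
  intros Ha Hb; split; intros H o1 o2 H1 H2.
  - destruct (in1_iso_pull H1) as [o1' [H1' ->]]; destruct (in1_iso_pull H2) as [o2' [H2' ->]].
    rewrite !lact_iso, !iso_eq; auto using lact_in.
  - specialize (H _ _ (in1_iso H1) (in1_iso H2)).
    rewrite !lact_iso, !iso_eq in H; auto using lact_in.
Qed.

Lemma GreenL_iso a b : U a -> U b -> (GreenL U m a b <-> GreenL V n (phi a) (phi b)).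
Proof.
  intros Ha Hb; split.
  - intros [u [v [Hu [Hv [E1 E2]]]]]; exists (option_map phi u), (option_map phi v).
    rewrite !lact_iso, E1, E2; auto using in1_iso.
  - intros [u [v [Hu [Hv [E1 E2]]]]].
    destruct (in1_iso_pull Hu) as [u' [Hu' ->]]; destruct (in1_iso_pull Hv) as [v' [Hv' ->]].
    rewrite !lact_iso, !iso_eq in *; auto using lact_in.
    exists u', v'; auto.
Qed.

Lemma idem_iso e : U e -> (idem U m e <-> idem V n (phi e)).
Proof.
  intro He; unfold idem; rewrite <- iso_mul, iso_eq; auto.
  split; intros [_ E]; auto using iso_in.
Qed.

Lemma semigroup_iso : semigroup U m -> semigroup V n.
Proof.
  intros [_ Hassoc]; split.
  - intros a b Ha Hb.
    destruct (iso_surj Ha) as [x [Hx <-]]; destruct (iso_surj Hb) as [y [Hy <-]].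
    rewrite <- iso_mul; auto using iso_in.
  - intros a b c Ha Hb Hc.
    destruct (iso_surj Ha) as [x [Hx <-]]; destruct (iso_surj Hb) as [y [Hy <-]].
    destruct (iso_surj Hc) as [z [Hz <-]].
    rewrite <- !iso_mul, Hassoc; auto.
Qed.

End Transport.

Lemma iso_dual (X Y : Type) (U : X -> Prop) (V : Y -> Prop) m n (phi : X -> Y) :
  iso U m V n phi -> iso U (dual m) V (dual n) phi.
Proof.
  intros (Hin & Hinj & Hsurj & Hmul); split; [| split; [| split]]; auto.
  intros x y Hx Hy; exact (Hmul y x Hy Hx).
Qed.

Section TransportDual.
Variables (X Y : Type) (U : X -> Prop) (V : Y -> Prop).
Variables (m : X -> X -> X) (n : Y -> Y -> Y) (phi : X -> Y).
Hypothesis Hiso : iso U m V n phi.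
Hypothesis HU : forall a b, U a -> U b -> U (m a b).

Let HU' : forall a b, U a -> U b -> U (dual m a b).
Proof. intros a b Ha Hb; exact (HU Hb Ha). Qed.

Lemma Lstar_iso a b : U a -> U b -> (Lstar U m a b <-> Lstar V n (phi a) (phi b)).
Proof. exact (Rstar_iso (iso_dual Hiso) HU' (a := a) (b := b)). Qed.

Lemma GreenR_iso a b : U a -> U b -> (GreenR U m a b <-> GreenR V n (phi a) (phi b)).
Proof. exact (GreenL_iso (iso_dual Hiso) HU' (a := a) (b := b)). Qed.

Lemma abundant_iso : abundant U m -> abundant V n.
Proof.
  intros Hab z Hz; destruct (iso_surj Hiso Hz) as [x [Hx <-]].
  destruct (Hab x Hx) as [[e [He Re]] [f [Hf Lf]]]; split.
  - exists (phi e); split; [apply (idem_iso Hiso HU (proj1 He)); exact He |].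
    exact (proj1 (Rstar_iso Hiso HU (proj1 He) Hx) Re).
  - exists (phi f); split; [apply (idem_iso Hiso HU (proj1 Hf)); exact Hf |].
    exact (proj1 (Lstar_iso (proj1 Hf) Hx) Lf).
Qed.

End TransportDual.

Definition image (X Y : Type) (phi : X -> Y) (S : X -> Prop) : Y -> Prop :=
  fun y => exists x, S x /\ phi x = y.

Section TransportTransversal.
Variables (X Y : Type) (U : X -> Prop) (V : Y -> Prop).
Variables (m : X -> X -> X) (n : Y -> Y -> Y) (phi : X -> Y) (S0 : X -> Prop).
Hypothesis Hiso : iso U m V n phi.
Hypothesis HS0 : qi_adequate_transversal U m S0.

Let HU : forall a b, U a -> U b -> U (m a b).
Proof. destruct HS0 as [[[H _] _] _]; exact H. Qed.

Let HS0U : forall x, S0 x -> U x.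
Proof. destruct HS0 as [(_ & _ & (H & _) & _) _]; exact H. Qed.

Let HS0mul : forall a b, S0 a -> S0 b -> S0 (m a b).
Proof. destruct HS0 as [(_ & _ & (_ & [H _] & _) & _) _]; exact H. Qed.

Local Notation W := (image phi S0).

Lemma iso_image : iso S0 m W n phi.
Proof.
  destruct Hiso as (Hin & Hinj & Hsurj & Hmul); split; [| split; [| split]].
  - intros x Hx; exists x; auto.
  - intros x y Hx Hy; apply Hinj; auto.
  - intros z [x [Hx E]]; exists x; auto.
  - intros x y Hx Hy; apply Hmul; auto.
Qed.

Lemma image_iff b : U b -> (W (phi b) <-> S0 b).
Proof.
  intro Hb; split; [intros [b' [Hb' E]] | intro H; exists b; auto].
  rewrite <- (proj1 (iso_eq Hiso (HS0U Hb') Hb) E); exact Hb'.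
Qed.

Lemma decomp_iso x b e f : U x -> U b -> U e -> U f ->
  (decomp U m S0 x b e f <-> decomp V n W (phi x) (phi b) (phi e) (phi f)).
Proof.
  intros Hx Hb He Hf; unfold decomp.
  rewrite (image_iff Hb), (idem_iso Hiso HU He), (idem_iso Hiso HU Hf).
  rewrite <- !(iso_mul Hiso), (iso_eq Hiso); auto.
  split; intros (Sb & Ie & If & Ex & (p & P1 & P2 & P3) & (q & Q1 & Q2 & Q3));
    repeat (split; [assumption |]).
  - split.
    + exists (phi p); pose proof P1 as [Sp _].
      rewrite <- (idem_iso iso_image HS0mul Sp), <- (Rstar_iso iso_image HS0mul Sp Sb),
              <- (GreenL_iso Hiso HU He (HS0U Sp)); auto.
    + exists (phi q); pose proof Q1 as [Sq _].
      rewrite <- (idem_iso iso_image HS0mul Sq), <- (Lstar_iso iso_image HS0mul Sq Sb),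
              <- (GreenR_iso Hiso HU Hf (HS0U Sq)); auto.
  - split.
    + destruct P1 as [[p' [Sp <-]] P1]; exists p'.
      rewrite (idem_iso iso_image HS0mul Sp), (Rstar_iso iso_image HS0mul Sp Sb),
              (GreenL_iso Hiso HU He (HS0U Sp)); auto.
      split; [split; [exists p'; auto | exact P1] | auto].
    + destruct Q1 as [[q' [Sq <-]] Q1]; exists q'.
      rewrite (idem_iso iso_image HS0mul Sq), (Lstar_iso iso_image HS0mul Sq Sb),
              (GreenR_iso Hiso HU Hf (HS0U Sq)); auto.
      split; [split; [exists q'; auto | exact Q1] | auto].
Qed.

Lemma qi_adequate_transversal_iso : qi_adequate_transversal V n W.
Proof.
  destruct HS0 as [(Hsg & Hab & (_ & Hsg0 & Hab0 & HL & HR) & [_ Hcomm] & Huniq) Hqi].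
  split; [split; [| split; [| split; [| split]]] |].
  - exact (semigroup_iso Hiso HU Hsg).
  - exact (abundant_iso Hiso HU Hab).
  - split; [| split; [| split; [| split]]].
    + intros z [x [Hx <-]]; apply (iso_in Hiso); auto.
    + exact (semigroup_iso iso_image HS0mul Hsg0).
    + exact (abundant_iso iso_image HS0mul Hab0).
    + intros a b [a' [Ha <-]] [b' [Hb <-]].
      rewrite <- (Lstar_iso iso_image HS0mul Ha Hb), <- (Lstar_iso Hiso HU (HS0U Ha) (HS0U Hb)).
      auto.
    + intros a b [a' [Ha <-]] [b' [Hb <-]].
      rewrite <- (Rstar_iso iso_image HS0mul Ha Hb), <- (Rstar_iso Hiso HU (HS0U Ha) (HS0U Hb)).
      auto.
  - split; [exact (abundant_iso iso_image HS0mul Hab0) |].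
    intros e f Ie If.
    destruct (proj1 Ie) as [e' [He <-]]; destruct (proj1 If) as [f' [Hf <-]].
    rewrite <- (idem_iso iso_image HS0mul He) in Ie.
    rewrite <- (idem_iso iso_image HS0mul Hf) in If.
    rewrite <- !(iso_mul iso_image), (Hcomm e' f'); auto.
  - intros z Hz; destruct (iso_surj Hiso Hz) as [x [Hx <-]].
    destruct (Huniq x Hx) as [b [[e [f D]] Hbu]].
    pose proof D as (Sb & [He _] & [Hf _] & _).
    exists (phi b); split.
    + exists (phi e), (phi f); apply decomp_iso; auto.
    + intros zb [e2 [f2 D2]]; pose proof D2 as ([b' [Sb' <-]] & [He2 _] & [Hf2 _] & _).
      destruct (iso_surj Hiso He2) as [e' [He' <-]].
      destruct (iso_surj Hiso Hf2) as [f' [Hf' <-]].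
      f_equal; apply Hbu; exists e', f'.
      apply (decomp_iso Hx (HS0U Sb') He' Hf'); exact D2.
  - intros a s b [a' [Ha <-]] Hs [b' [Hb <-]].
    destruct (iso_surj Hiso Hs) as [s' [Hs' <-]].
    exists (m (m a' s') b'); split; [apply Hqi; auto |].
    rewrite !(iso_mul Hiso); auto.
Qed.

End TransportTransversal.

Theorem proposition2p7 (X : Type) (m : X -> X -> X) (S0 : X -> Prop)
  (HS0 : qi_adequate_transversal (fun _ => True) m S0) :
  let L := Lset (fun _ => True) m S0 in
  let R := Rset (fun _ => True) m S0 in
  let T := Tset (fun _ => True) m S0 in
  let mT := mulT (fun _ => True) m S0 in
  (semigroup L m /\ left_adequate L m) /\
  (semigroup R m /\ right_adequate R m) /\
  semigroup T mT /\
  (exists phi : X -> X * X, iso (fun _ => True) m T mT phi) /\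
  (exists T0 : X * X -> Prop,
     qi_adequate_transversal T mT T0 /\
     exists psi : X -> X * X, iso S0 m T0 mT psi).
Proof.
  intros L R T mT.
  assert (Hiso := lr_pair_iso HS0).
  split; [| split; [| split; [| split]]].
  - exact (Lset_left_adequate HS0).
  - exact (Rset_right_adequate HS0).
  - exact (semigroup_iso Hiso (fun _ _ _ _ => I) (proj1 (proj1 HS0))).
  - exists (lr_pair m S0); exact Hiso.
  - exists (image (lr_pair m S0) S0); split.
    + exact (qi_adequate_transversal_iso Hiso HS0).
    + exists (lr_pair m S0); exact (iso_image Hiso HS0).
Qed.
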